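(* Let $\mathcal S=(\mathcal P,\mathcal L)$ be a linear space with $v$ points and constant line size $k$, $2<k<v$, and $b$ lines; let $G\le\mathrm{Aut}(\mathcal S)$ be transitive on lines, and let $\mathfrak C$ be a non-trivial $G$-invariant partition of $\mathcal P$ with $d$ classes of size $c$. If the permutation group $G^{\mathfrak C}$ induced by $G$ on $\mathfrak C$ is $t$-transitive, then $t\le t_{\max}$.
   Context: A linear space: a finite set $\mathcal P$ of points and a set $\mathcal L$ of subsets (lines) such that any two distinct points lie on exactly one line and each line has at least two points. For a line $\lambda$ and $0\le i\le k$, $d_i$ is the number of classes $C\in\mathfrak C$ with $|C\cap\lambda|=i$ (independent of $\lambda$); $\mathrm{spec}\,\mathcal S=\{i>0:d_i\ne0\}$. For a non-empty $S\subseteq\mathrm{spec}\,\mathcal S$ put $d(S)=\sum_{i\in S}d_i$. Define $t_{\max}$ to be the largest positive integer $t\le d$ such that for all non-empty $S\subseteq\mathrm{spec}\,\mathcal S$ and all positive integers $h\le\min\{t,d(S)\}$, the number $\prod_{j=0}^{h-1}(d-j)$ divides $b\prod_{j=0}^{h-1}(d(S)-j)$. *)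

From mathcomp Require Import all_boot all_fingroup.
Set Implicit Arguments. Unset Strict Implicit. Unset Printing Implicit Defensive.

Section Defs.
Variable T : finType.

Definition linear_space (L : {set {set T}}) : Prop :=
  (forall l, l \in L -> 2 <= #|l|) /\
  (forall x y : T, x != y -> exists! l, l \in L /\ x \in l /\ y \in l).

Definition is_aut (L : {set {set T}}) (g : {perm T}) : Prop :=
  forall l : {set T}, (g @: l \in L) = (l \in L).

Definition line_transitive (L : {set {set T}}) (G : {group {perm T}}) : Prop :=
  forall l1 l2, l1 \in L -> l2 \in L -> exists2 g, g \in G & g @: l1 = l2.

Definition G_invariant (C : {set {set T}}) (G : {group {perm T}}) : Prop :=
  forall g X, g \in G -> X \in C -> g @: X \in C.

Definition induced_t_transitive (C : {set {set T}}) (G : {group {perm T}})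
    (t : nat) : Prop :=
  t <= #|C| /\
  forall s1 s2 : seq {set T},
    size s1 = t -> size s2 = t -> uniq s1 -> uniq s2 ->
    {subset s1 <= C} -> {subset s2 <= C} ->
    exists2 g, g \in G & map (fun X : {set T} => g @: X) s1 = s2.

Definition dcount (C : {set {set T}}) (lam : {set T}) (i : nat) : nat :=
  #|[set X in C | #|X :&: lam| == i]|.

Definition in_spec (C : {set {set T}}) (lam : {set T}) (k : nat)
    (S : {set 'I_k.+1}) : bool :=
  (S != set0) && [forall i in S, (0 < i) && (dcount C lam i != 0)].

Definition dS (C : {set {set T}}) (lam : {set T}) (k : nat)
    (S : {set 'I_k.+1}) : nat :=
  \sum_(i in S) dcount C lam i.

Definition tmax_cond (C : {set {set T}}) (lam : {set T}) (k b d t : nat) : bool :=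
  [forall S : {set 'I_k.+1}, in_spec C lam S ==>
     [forall h : 'I_(t.+1), (0 < h) && (h <= dS C lam S) ==>
        (d ^_ h %| b * (dS C lam S) ^_ h)]].

Definition tmax (C : {set {set T}}) (lam : {set T}) (k b d : nat) : nat :=
  \max_(t < d.+1 | (0 < t) && tmax_cond C lam k b d t) t.

End Defs.

From mathcomp Require Import all_boot all_fingroup.
Set Implicit Arguments. Unset Strict Implicit. Unset Printing Implicit Defensive.

(* Fix a set S of intersection sizes and h <= t, and count the pairs
   (l, (X_1, ..., X_h)) of a line l and h distinct classes, each meeting l in
   a number of points lying in S.  By line-transitivity every line carries
   d(S)^_h such tuples, so there are b * d(S)^_h pairs; by h-transitivity of G
   on the classes every tuple of distinct classes lies in the same number N of
   such pairs, so there are d^_h * N of them.  Hence d^_h divides b * d(S)^_h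
   for every h <= t, which is the condition defining t_max. *)

Lemma card_set_sum (I : finType) (A : {set I}) (P : pred I) :
  #|[set i in A | P i]| = \sum_(i in A) P i.
Proof.
rewrite -sum1_card big_mkcond [RHS]big_mkcond; apply: eq_bigr => i _.
by rewrite inE; case: (i \in A); case: (P i).
Qed.

Lemma double_counting (I J : finType) (A : {set I}) (B : {set J})
    (R : I -> J -> bool) :
  \sum_(i in A) #|[set j in B | R i j]| = \sum_(j in B) #|[set i in A | R i j]|.
Proof.
under eq_bigr do rewrite card_set_sum.
by rewrite exchange_big; apply: eq_bigr => j _; rewrite card_set_sum.
Qed.

Lemma sum_card_fibers (I : finType) n (A : {set I}) (f : I -> nat) (S : {set 'I_n}) :
  \sum_(k in S) #|[set i in A | f i == k]| = #|[set i in A | [exists k in S, f i == k]]|.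
Proof.
rewrite double_counting card_set_sum; apply: eq_bigr => i _.
case: existsP => [[k0 /andP [k0S /eqP fik0]] | nok]; last first.
  apply: eq_card0 => k; rewrite inE; apply/andP => -[kS fik].
  by apply: nok; exists k; rewrite kS.
apply/eqP/cards1P; exists k0; apply/setP => k; rewrite !inE fik0.
by apply/andP/eqP => [[_ /eqP /ord_inj] | ->].
Qed.

Lemma extend_uniq_seq (I : finType) (A : {set I}) (s : seq I) (n : nat) :
  uniq s -> {subset s <= A} -> size s <= n -> n <= #|A| ->
  exists2 r : seq I, [/\ size r = n, uniq r & {subset r <= A}] & take (size s) r = s.
Proof.
move=> uniq_s sA sn nA; set w := s ++ [seq i <- enum A | i \notin s].
have uniq_w : uniq w.
  rewrite cat_uniq uniq_s filter_uniq ?enum_uniq //= andbT.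
  by apply/hasPn => i; rewrite mem_filter => /andP [].
have mem_w : w =i A.
  move=> i; rewrite mem_cat mem_filter mem_enum.
  by case si: (i \in s); rewrite //= sA.
have size_w : size w = #|A| by rewrite -(card_uniqP uniq_w); apply: eq_card.
exists (take n w); last by rewrite take_takel // take_size_cat.
split; first by rewrite size_takel // size_w.
  exact: take_uniq.
by move=> i /mem_take; rewrite mem_w.
Qed.

Lemma induced_t_transitive_leq (T : finType) (C : {set {set T}})
    (G : {group {perm T}}) t h :
  induced_t_transitive C G t -> h <= t -> induced_t_transitive C G h.
Proof.
move=> [tC trans_t] ht; split=> [|s1 s2 size1 size2 uniq1 uniq2 s1C s2C].
  exact: leq_trans tC.
have s1t : size s1 <= t by rewrite size1.
have s2t : size s2 <= t by rewrite size2.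
have [r1 [size_r1 uniq_r1 r1C] take_r1] := extend_uniq_seq uniq1 s1C s1t tC.
have [r2 [size_r2 uniq_r2 r2C] take_r2] := extend_uniq_seq uniq2 s2C s2t tC.
have [g gG map_r1] := trans_t r1 r2 size_r1 size_r2 uniq_r1 uniq_r2 r1C r2C.
by exists g; rewrite // -take_r1 -take_r2 size1 size2 map_take map_r1.
Qed.

Lemma card_imsetI_perm (I : finType) (g : {perm I}) (A B : {set I}) :
  #|g @: A :&: g @: B| = #|A :&: B|.
Proof.
rewrite -imsetI; last by move=> x y _ _; apply: perm_inj.
by rewrite card_imset //; apply: perm_inj.
Qed.

Lemma leq_card_imset_sub (I J : finType) (f : I -> J) (A : {set I}) (B : {set J}) :
  injective f -> f @: A \subset B -> #|A| <= #|B|.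
Proof. by move=> injf; rewrite -(card_imset A injf); apply: subset_leq_card. Qed.

Section LineCounting.
Variables (T : finType) (L : {set {set T}}) (G : {group {perm T}}) (C : {set {set T}}).
Hypothesis autG : forall g, g \in G -> is_aut L g.
Hypothesis invC : G_invariant C G.
Hypothesis transL : line_transitive L G.

(* [P] plays the role of the set S of intersection sizes: the paper's d(S) is
   [#|meeting_classes l|]. *)
Variable P : pred nat.

Definition meeting_classes (l : {set T}) := [set X in C | P #|X :&: l|].

Definition lines_meeting_all (s : seq {set T}) :=
  [set l in L | all (mem (meeting_classes l)) s].

Definition distinct_classes h :=
  [set s : h.-tuple {set T} | all (mem C) s && uniq s].

Lemma card_distinct_classes h : #|distinct_classes h| = #|C| ^_ h.
Proof. exact: card_uniq_tuples. Qed.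

Lemma card_meeting_classes_perm g l :
  g \in G -> #|meeting_classes l| <= #|meeting_classes (g @: l)|.
Proof.
move=> gG; apply: (leq_card_imset_sub (imset_inj (@perm_inj _ g))).
apply/subsetP => Y /imsetP [X]; rewrite !inE => /andP [XC PX] ->.
by rewrite invC // card_imsetI_perm.
Qed.

Lemma card_meeting_classes_line l1 l2 :
  l1 \in L -> l2 \in L -> #|meeting_classes l1| = #|meeting_classes l2|.
Proof.
move=> l1L l2L.
have [g gG l2E] := transL l1L l2L; have [g' g'G l1E] := transL l2L l1L.
apply/anti_leq/andP; split.
  by rewrite -l2E card_meeting_classes_perm.
by rewrite -[in X in _ <= X]l1E card_meeting_classes_perm.
Qed.

Lemma card_lines_meeting_all_perm g s :
  g \in G ->
  #|lines_meeting_all s| <= #|lines_meeting_all [seq g @: X | X : {set T} <- s]|.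
Proof.
move=> gG; apply: (leq_card_imset_sub (imset_inj (@perm_inj _ g))).
apply/subsetP => m /imsetP [l]; rewrite !inE => /andP [lL sl] ->.
rewrite (autG gG) lL all_map; apply: sub_all sl => X /=.
by rewrite !inE card_imsetI_perm => /andP [XC ->]; rewrite invC.
Qed.

Lemma card_lines_meeting_all_classes h s1 s2 :
  induced_t_transitive C G h ->
  s1 \in distinct_classes h -> s2 \in distinct_classes h ->
  #|lines_meeting_all s1| = #|lines_meeting_all s2|.
Proof.
case=> _ trans_h; rewrite !inE => /andP [/allP s1C uniq1] /andP [/allP s2C uniq2].
have [g gG s2E] := trans_h s1 s2 (size_tuple s1) (size_tuple s2) uniq1 uniq2 s1C s2C.
have [g' g'G s1E] := trans_h s2 s1 (size_tuple s2) (size_tuple s1) uniq2 uniq1 s2C s1C.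
apply/anti_leq/andP; split.
  by rewrite -[in X in _ <= #|lines_meeting_all X|]s2E card_lines_meeting_all_perm.
by rewrite -[in X in _ <= #|lines_meeting_all X|]s1E card_lines_meeting_all_perm.
Qed.

Lemma ffact_dvdn_card_meeting_classes h l :
  induced_t_transitive C G h -> l \in L ->
  #|C| ^_ h %| #|L| * #|meeting_classes l| ^_ h.
Proof.
move=> trans_h lL; set D := distinct_classes h.
have tuples_in_meeting l' : #|[set s in D | all (mem (meeting_classes l')) s]|
                              = #|meeting_classes l'| ^_ h.
  rewrite -card_uniq_tuples; apply: eq_card => s; rewrite !inE andbC.
  case: allP => [sM | //]; rewrite (_ : all (mem C) s) //.
  by apply/allP => X /sM; rewrite /= !inE => /andP [].
have -> : #|L| * #|meeting_classes l| ^_ h = \sum_(s in D) #|lines_meeting_all s|.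
  rewrite -sum_nat_const.
  rewrite (double_counting D L (fun s l' => all (mem (meeting_classes l')) s)).
  apply: eq_bigr => l' l'L.
  by rewrite tuples_in_meeting (card_meeting_classes_line l'L lL).
case: (set_0Vmem D) => [-> | [s0 s0D]]; first by rewrite big_set0 dvdn0.
rewrite (eq_bigr (fun=> #|lines_meeting_all s0|)) => [|s sD]; last first.
  exact: card_lines_meeting_all_classes.
by rewrite sum_nat_const card_distinct_classes dvdn_mulr.
Qed.

End LineCounting.

Theorem lemma4p7 (T : finType) (L : {set {set T}}) (G : {group {perm T}})
    (C : {set {set T}}) (v k b d c t : nat) :
  linear_space L ->
  #|T| = v -> (forall l, l \in L -> #|l| = k) -> 2 < k -> k < v ->
  #|L| = b ->
  (forall g, g \in G -> is_aut L g) ->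
  line_transitive L G ->
  partition C [set: T] -> G_invariant C G ->
  #|C| = d -> (forall X, X \in C -> #|X| = c) -> 1 < c -> 1 < d ->
  induced_t_transitive C G t ->
  forall lam, lam \in L -> t <= tmax C lam k b d.
Proof.
move=> _ _ _ _ _ <- autG transL _ invC <- _ _ _ trans_t lam lamL.
case: t trans_t => [//|t] trans_t.
have t_lt : t.+1 < #|C|.+1 by rewrite ltnS; case: trans_t.
apply: (leq_bigmax_cond (Ordinal t_lt)) => /=.
apply/forallP => S; apply/implyP => _; apply/forallP => h; apply/implyP => _.
have trans_h : induced_t_transitive C G h.
  by apply: induced_t_transitive_leq trans_t _; rewrite -ltnS.
rewrite /dS /dcount sum_card_fibers.
exact: (ffact_dvdn_card_meeting_classes autG invC transL
          (fun n => [exists i in S, n == i]) trans_h lamL).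
Qed.
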